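(* Let $R$ be a Noetherian commutative ring with unit. Then $(\mathrm{Id}^+(R),\tau^{\mathrm{con}},\le)$ and $(\mathrm{Id}(R),\tau^{\mathrm{con}},\le)$ are Noetherian Priestley spaces.
   Context: $\mathrm{Id}^+(R)$ is the set of all ideals of $R$ (including $R$) and $\mathrm{Id}(R)$ the set of proper ideals. Identifying an ideal with its characteristic function, these are closed subsets of $\{0,1\}^R$, and $\tau^{\mathrm{con}}$ is the induced product topology. The order is reverse inclusion: $\mathfrak A\le\mathfrak B$ iff $\mathfrak B\subseteq\mathfrak A$. A Priestley space is a partially ordered set with a quasi-compact topology such that whenever $y\not\le x$ there is a clopen down-set containing $x$ but not $y$; it is Noetherian if every decreasing sequence of closed down-sets is eventually stationary. *)

From HB Require Import structures.
From mathcomp Require Import all_boot all_order all_algebra.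
From mathcomp Require Import all_classical topology_structure compact function_spaces bool_topology.

Set Implicit Arguments. Unset Strict Implicit. Unset Printing Implicit Defensive.
Import GRing.Theory.
Local Open Scope classical_set_scope.
Local Open Scope ring_scope.

Definition is_ideal (R : comPzRingType) (I : R -> bool) : Prop :=
  [/\ I 0,
      (forall x y, I x -> I y -> I (x + y)) &
      (forall r x, I x -> I (r * x))].

Definition noetherian_ring (R : comPzRingType) : Prop :=
  forall I : nat -> (R -> bool),
    (forall n, is_ideal (I n)) ->
    (forall n x, I n x -> I n.+1 x) ->
    exists N, forall n, (N <= n)%N -> I n = I N.

(* Id^+(R) and Id(R), as subsets of {0,1}^R with the product topology. *)
Definition Idp (R : comPzRingType) : set {ptws R -> bool} :=
  [set I | is_ideal I].
Definition Idproper (R : comPzRingType) : set {ptws R -> bool} :=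
  [set I | is_ideal I /\ ~~ I 1].

Definition rev_incl (R : Type) (A B : {ptws R -> bool}) : Prop :=
  forall x, B x -> A x.

Definition open_in {T : topologicalType} (X D : set T) : Prop :=
  exists U, open U /\ D = X `&` U.
Definition closed_in {T : topologicalType} (X D : set T) : Prop :=
  exists C, closed C /\ D = X `&` C.
Definition clopen_in {T : topologicalType} (X D : set T) : Prop :=
  open_in X D /\ closed_in X D.

Definition down_set_in {T : Type} (X : set T) (le : T -> T -> Prop) (D : set T) :=
  D `<=` X /\ forall x y, X y -> D x -> le y x -> D y.

Definition partial_order_on {T : Type} (X : set T) (le : T -> T -> Prop) :=
  [/\ (forall x, X x -> le x x),
      (forall x y, X x -> X y -> le x y -> le y x -> x = y) &
      (forall x y z, X x -> X y -> X z -> le x y -> le y z -> le x z)].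

Definition priestley_space {T : topologicalType} (X : set T) (le : T -> T -> Prop) :=
  [/\ partial_order_on X le,
      compact X &
      forall x y, X x -> X y -> ~ le y x ->
        exists D, [/\ clopen_in X D, down_set_in X le D, D x & ~ D y]].

Definition noetherian_space {T : topologicalType} (X : set T) (le : T -> T -> Prop) :=
  forall D : nat -> set T,
    (forall n, closed_in X (D n) /\ down_set_in X le (D n)) ->
    (forall n, D n.+1 `<=` D n) ->
    exists N, forall n, (N <= n)%N -> D n = D N.

Definition noetherian_priestley_space {T : topologicalType} (X : set T) (le : T -> T -> Prop) :=
  priestley_space X le /\ noetherian_space X le.

From mathcomp Require Import all_boot all_order all_algebra.
From mathcomp Require Import all_classical topology_structure compact function_spaces bool_topology discrete_topology.

(* Ideals form a closed subset of the compact Cantor cube {0,1}^R, and the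
   clopen sets [{I | z \in I}] are down-sets for reverse inclusion that separate
   points, so any closed set of ideals is a Priestley space.  For
   Noetherianity, take a decreasing sequence of closed down-sets D_n that never
   stabilises, and ideals J_n in D_n outside their intersection.  A cluster point L of (J_n) lies in
   every D_n; L is finitely generated, so some J_n agrees with L on the
   generators of L, hence contains L, i.e. J_n <= L, and J_n lies in every D_m
   after all. *)

Set Implicit Arguments. Unset Strict Implicit. Unset Printing Implicit Defensive.
Import GRing.Theory.
Local Open Scope classical_set_scope.
Local Open Scope ring_scope.

Section FinitelyGeneratedIdeals.
Variable R : comPzRingType.

Fixpoint ideal_gen (s : seq R) (y : R) : bool :=
  match s with
  | [::] => y == 0
  | x :: s' => `[< exists r, ideal_gen s' (y - r * x) >]
  end.

Lemma ideal_gen_is_ideal s : is_ideal (ideal_gen s).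
Proof.
elim: s => [|x s [IH0 IHD IHM]] /=.
  split=> [//|x y /eqP-> /eqP->|r x /eqP->]; by rewrite ?addr0 ?mulr0.
split.
- by apply/asboolP; exists 0; rewrite mul0r subr0.
- move=> a b /asboolP[r ha] /asboolP[r' hb]; apply/asboolP; exists (r + r').
  have -> : a + b - (r + r') * x = (a - r * x) + (b - r' * x).
    by rewrite mulrDl opprD addrACA.
  exact: IHD.
- move=> t a /asboolP[r ha]; apply/asboolP; exists (t * r).
  have -> : t * a - t * r * x = t * (a - r * x) by rewrite mulrBr mulrA.
  exact: IHM.
Qed.

Lemma ideal_gen_min s (J : R -> bool) :
  is_ideal J -> (forall g, g \in s -> J g) -> forall y, ideal_gen s y -> J y.
Proof.
move=> [J0 JD JM]; elim: s => [|x s IH] sJ y /=; first by move/eqP->.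
move=> /asboolP[r hr]; rewrite -(subrK (r * x) y).
apply: JD; last by apply/JM/sJ; rewrite mem_head.
by apply: IH hr => g gs; apply: sJ; rewrite inE gs orbT.
Qed.

Lemma ideal_gen_cons x s y : ideal_gen s y -> ideal_gen (x :: s) y.
Proof. by move=> sy; apply/asboolP; exists 0; rewrite mul0r subr0. Qed.

Lemma mem_ideal_gen s g : g \in s -> ideal_gen s g.
Proof.
elim: s => [//|x s IH]; rewrite inE => /orP[/eqP->|/IH]; last exact: ideal_gen_cons.
by apply/asboolP; exists 1; rewrite mul1r subrr; case: (ideal_gen_is_ideal s).
Qed.

Lemma noetherian_ideal_fg (L : R -> bool) :
  noetherian_ring R -> is_ideal L -> exists s, L = ideal_gen s.
Proof.
move=> hR iL; apply: contrapT => not_fg.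
have escape s : exists x, (forall g, g \in s -> L g) -> L x /\ ~~ ideal_gen s x.
  have [sL|] := pselect (forall g, g \in s -> L g); last by exists 0.
  have [y /not_implyP[Ly /negP ny]] : exists y, ~ (L y -> ideal_gen s y).
    apply/existsNP => genL; apply: not_fg; exists s; apply/funext => y.
    by apply/idP/idP => [/genL|/(ideal_gen_min iL sL)].
  by exists y.
have [f hf] := choice escape.
pose fix chain n := if n is n'.+1 then f (chain n') :: chain n' else [::].
have chainL n g : g \in chain n -> L g.
  elim: n g => [//|n IH] g; rewrite inE => /orP[/eqP->|/IH //].
  by case: (hf (chain n) IH).
have [N stable] := hR (fun n => ideal_gen (chain n))
  (fun n => ideal_gen_is_ideal _) (fun n x => @ideal_gen_cons _ _ x).
have [_] := hf (chain N) (chainL N); rewrite -(stable N.+1 (leqnSn N)).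
by rewrite mem_ideal_gen ?mem_head.
Qed.

End FinitelyGeneratedIdeals.

Section PointwiseBoolTopology.
Variable T : eqType.
Implicit Types (p f : {ptws T -> bool}) (s : seq T).

Lemma nbhs_ptws_eval p z : nbhs p [set f | f z = p z].
Proof. exact: (@proj_continuous T (fun _ => bool) z p) (discrete_set1 _). Qed.

Lemma nbhs_ptws_agree p s : nbhs p [set f : {ptws T -> bool} | {in s, f =1 p}].
Proof.
elim: s => [|x s IH]; first by apply: filterS filterT.
apply: filterS (filterI (nbhs_ptws_eval p x) IH) => f [fx fs] g.
by rewrite inE => /orP[/eqP->|/fs].
Qed.

Lemma closure_ptws_agree (A : set {ptws T -> bool}) p s :
  closure A p -> exists2 f, A f & {in s, f =1 p}.
Proof. by move=> /(_ _ (nbhs_ptws_agree p s)) [f [Af agree]]; exists f. Qed.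

Lemma open_ptws_eval z : open [set f : {ptws T -> bool} | f z].
Proof. by rewrite openE => p pz; apply: filterS (nbhs_ptws_eval p z) => f /= ->. Qed.

Lemma closed_ptws_eval z : closed [set f : {ptws T -> bool} | f z].
Proof.
by move=> p /(closure_ptws_agree [:: z]) [f fz /(_ z (mem_head _ _))] /= <-.
Qed.

Lemma closed_ptws_bool_compact (X : set {ptws T -> bool}) : closed X -> compact X.
Proof.
move=> clX; apply: subclosed_compact clX _ (subsetT X).
have := @tychonoff T (fun _ => bool) (fun _ => setT) (fun _ => bool_compact).
by congr compact; apply/seteqP; split.
Qed.

End PointwiseBoolTopology.

Section ReverseInclusionPriestley.
Variable T : eqType.
Variable X : set {ptws T -> bool}.
Hypothesis closed_X : closed X.

Lemma rev_incl_partial_order : partial_order_on X (@rev_incl T).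
Proof.
split=> [x _ z //|x y _ _ xy yx|x y z _ _ _ xy yz t /yz /xy //].
by apply/funext => z; apply/idP/idP => [/yx|/xy].
Qed.

Lemma rev_incl_separation x y : X x -> ~ rev_incl y x ->
  exists D, [/\ clopen_in X D, down_set_in X (@rev_incl T) D, D x & ~ D y].
Proof.
move=> Xx /existsNP[z /not_implyP[xz yz]].
exists (X `&` [set f : {ptws T -> bool} | f z]); split=> //; last by case.
  by split; exists [set f : {ptws T -> bool} | f z]; split=> //;
    [exact: open_ptws_eval|exact: closed_ptws_eval].
by split=> [f []//|a b Xb [_ az] ba]; split=> //; apply: ba.
Qed.

Lemma priestley_space_rev_incl : priestley_space X (@rev_incl T).
Proof.
split; [exact: rev_incl_partial_order|exact: closed_ptws_bool_compact|].
by move=> x y Xx _; exact: rev_incl_separation.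
Qed.

End ReverseInclusionPriestley.

Section DecreasingSequences.
Variables (U : Type) (D : nat -> set U).
Hypothesis D_decr : forall n, D n.+1 `<=` D n.

Lemma decreasing_seq_subset m n : (m <= n)%N -> D n `<=` D m.
Proof.
move=> /subnK <-; elim: (n - m)%N => [|k IH] //=.
by rewrite addSn => f /D_decr /IH.
Qed.

Lemma unstable_decreasing_seq :
  ~ (exists N, forall n, (N <= n)%N -> D n = D N) ->
  forall N, exists f, D N f /\ exists m, ~ D m f.
Proof.
move=> unstable N; apply: contrapT => /forallNP stays; apply: unstable.
exists N => n Nn; apply/seteqP; split; first exact: decreasing_seq_subset.
move=> f DNf; apply: contrapT => Dnf.
by apply: (stays f); split=> //; exists n.
Qed.

End DecreasingSequences.

Lemma compact_seq_cluster (U : topologicalType) (X : set U) (J : nat -> U) :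
  compact X -> (forall n, X (J n)) -> exists2 L, X L & cluster (J @ \oo) L.
Proof.
move=> cX XJ; have [|L [XL clL]] := cX (J @ \oo) _; last by exists L.
by exists 0%N => // n _; exact: XJ.
Qed.

Lemma cluster_seq_closed_in (U : topologicalType) (X C : set U) (J : nat -> U) L :
  closed_in X C -> X L -> (\forall n \near \oo, C (J n)) -> cluster (J @ \oo) L -> C L.
Proof.
move=> [K [clK ->]] XL JC clL; split=> //; apply: clK => B nB.
by apply: clL nB; apply: filterS JC => n [].
Qed.

Section IdealSpaces.
Variable R : comPzRingType.

Lemma closed_Idp : closed (@Idp R).
Proof.
move=> p clp; split.
- by have [f [f0 _ _] /(_ 0 (mem_head _ _)) <-] := closure_ptws_agree [:: 0] clp.
- move=> x y px py.
  have [f [_ fD _] agree] := closure_ptws_agree [:: x; y; x + y] clp.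
  by rewrite -agree ?fD ?agree // !inE eqxx ?orbT.
- move=> r x px.
  have [f [_ _ fM] agree] := closure_ptws_agree [:: x; r * x] clp.
  by rewrite -agree ?fM ?agree // !inE eqxx ?orbT.
Qed.

Lemma Idproper_sub_Idp : @Idproper R `<=` @Idp R.
Proof. by move=> f []. Qed.

Lemma closed_Idproper : closed (@Idproper R).
Proof.
move=> p clp; split; first exact/closed_Idp/(closureS Idproper_sub_Idp).
by have [f [_ f1] /(_ 1 (mem_head _ _)) <-] := closure_ptws_agree [:: 1] clp.
Qed.

Hypothesis R_noetherian : noetherian_ring R.

Lemma noetherian_space_rev_incl (X : set {ptws R -> bool}) :
  closed X -> X `<=` @Idp R -> noetherian_space X (@rev_incl R).
Proof.
move=> clX XI D hD D_decr; apply: contrapT => unstable.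
have [J hJ] := choice (unstable_decreasing_seq D_decr unstable).
have XJ n : X (J n) by case: (hD n) => _ [DX _]; exact/DX/(hJ n).1.
have [L XL clL] := compact_seq_cluster (closed_ptws_bool_compact clX) XJ.
have DL m : D m L.
  apply: cluster_seq_closed_in (hD m).1 XL _ clL.
  by exists m => // n mn; apply: (decreasing_seq_subset D_decr mn); exact: (hJ n).1.
have [s eL] := noetherian_ideal_fg R_noetherian (XI _ XL).
have Jrange : (J @ \oo) (range J) by exists 0%N => // n _; exists n.
have [_ [[n _ <-] agree]] := clL _ _ Jrange (nbhs_ptws_agree L s).
have Jn_le_L : rev_incl (J n) L.
  move=> x; rewrite eL; apply: ideal_gen_min (XI _ (XJ n)) _ x => g gs.
  by rewrite agree // eL mem_ideal_gen.
have [_ [m]] := hJ n; apply.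
by case: (hD m) => _ [_ down]; exact: down (XJ n) (DL m) Jn_le_L.
Qed.

Lemma noetherian_priestley_rev_incl (X : set {ptws R -> bool}) :
  closed X -> X `<=` @Idp R -> noetherian_priestley_space X (@rev_incl R).
Proof.
by move=> clX XI; split; [exact: priestley_space_rev_incl|exact: noetherian_space_rev_incl].
Qed.

End IdealSpaces.

Theorem lemma3p18 (R : comPzRingType) (hR : noetherian_ring R) :
  noetherian_priestley_space (@Idp R) (@rev_incl R) /\
  noetherian_priestley_space (@Idproper R) (@rev_incl R).
Proof.
split; apply: noetherian_priestley_rev_incl => //.
- exact: closed_Idp.
- exact: closed_Idproper.
- exact: Idproper_sub_Idp.
Qed.
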